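(* Let $\mathfrak S=(S,\xrightarrow{F},\le)$ be an $\infty$-effective complete functional WSTS, $s_0\in S$, and let $A_n$ be the value of the set $A$ computed by the procedure $\mathbf{Clover}_{\mathfrak S}$ on input $s_0$ after $n$ iterations of the while statement. Then $A_n$ is finite, and $A_n\le^\flat A_{n+1}\le^\flat Clover_{\mathfrak S}(s_0)$ for every $n\in\mathbb N$.
   Context: Complete functional WSTS: $(S,\le)$ a well partial order which is a continuous dcpo; $F$ a finite set of partial continuous maps (Scott-open domain, $f(\bigvee D)=\bigvee f(D)$ for directed $D\subseteq\operatorname{dom}f$); $s\to f(s)$. $Post(A)$: one-step successors; $Post^*$: reachability; $Cover_{\mathfrak S}(s)=\downarrow Post^*(\downarrow s)$; $\operatorname{Lub}(E)=\{\bigvee D\mid D\subseteq E\text{ directed}\}$; $Clover_{\mathfrak S}(s)=\operatorname{Max}\operatorname{Lub}(Cover_{\mathfrak S}(s))$. $B\le^\flat C$ iff $\downarrow B\subseteq\downarrow C$. $F^*$: finite compositions of maps of $F$. Lub-acceleration: $\operatorname{dom}g^\infty=\operatorname{dom}g$, $g^\infty(x)=\bigvee_n g^n(x)$ if $x<g(x)$, else $g(x)$. $\infty$-effective: states finitely coded, order decidable, maps computable with decidable domains, $g^\infty$ computable for all $g\in F^*$. Procedure $\mathbf{Clover}_{\mathfrak S}(s_0)$: $A\leftarrow\{s_0\}$; while $Post(A)\not\le^\flat A$: choose fairly $(g,a)\in F^*\times A$ with $a\in\operatorname{dom}g$, and set $A\leftarrow A\cup\{g^\infty(a)\}$; return $\operatorname{Max}A$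 (fair: on infinite runs every eligible pair is eventually chosen). *)

(* sets are predicates S -> Prop, partial maps are S -> option S. *)
From Stdlib Require Import List Arith Relations.
Import ListNotations.

Section WSTS.
Context {S : Type} (le : S -> S -> Prop).

Definition lt (x y : S) : Prop := le x y /\ x <> y.

Definition partial_order : Prop :=
  (forall x, le x x) /\
  (forall x y, le x y -> le y x -> x = y) /\
  (forall x y z, le x y -> le y z -> le x z).

Definition wpo : Prop :=
  partial_order /\ forall f : nat -> S, exists i j, i < j /\ le (f i) (f j).

Definition directed (D : S -> Prop) : Prop :=
  (exists x, D x) /\
  forall x y, D x -> D y -> exists z, D z /\ le x z /\ le y z.

Definition is_lub (D : S -> Prop) (x : S) : Prop :=
  (forall d, D d -> le d x) /\
  (forall u, (forall d, D d -> le d u) -> le x u).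

Definition dcpo : Prop :=
  forall D, directed D -> exists x, is_lub D x.

Definition way_below (x y : S) : Prop :=
  forall D d, directed D -> is_lub D d -> le y d -> exists z, D z /\ le x z.

Definition continuous_dcpo : Prop :=
  dcpo /\
  forall x, directed (fun y => way_below y x) /\ is_lub (fun y => way_below y x) x.

Definition scott_open (U : S -> Prop) : Prop :=
  (forall x y, U x -> le x y -> U y) /\
  (forall D d, directed D -> is_lub D d -> U d -> exists z, D z /\ U z).

Definition dom (f : S -> option S) (x : S) : Prop := f x <> None.

Definition partial_continuous (f : S -> option S) : Prop :=
  scott_open (dom f) /\
  forall D d, directed D -> (forall x, D x -> dom f x) -> is_lub D d ->
    exists fd, f d = Some fd /\ is_lub (fun y => exists x, D x /\ f x = Some y) fd.

Definition complete_functional_WSTS (F : list (S -> option S)) : Prop :=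
  wpo /\ continuous_dcpo /\ forall f, In f F -> partial_continuous f.

Fixpoint comp (w : list (S -> option S)) (x : S) : option S :=
  match w with
  | [] => Some x
  | f :: w' => match f x with Some y => comp w' y | None => None end
  end.

Definition in_Fstar (F : list (S -> option S)) (w : list (S -> option S)) : Prop :=
  Forall (fun f => In f F) w.

Fixpoint giter (g : S -> option S) (n : nat) (x : S) : option S :=
  match n with
  | 0 => Some x
  | Datatypes.S n' => match giter g n' x with Some y => g y | None => None end
  end.

(* lub-acceleration, as a relation: accel g x y <-> x in dom g and g^infty(x) = y *)
Definition accel (g : S -> option S) (x y : S) : Prop :=
  exists gx, g x = Some gx /\
    ((lt x gx /\ is_lub (fun z => exists n, giter g n x = Some z) y) \/
     (~ lt x gx /\ y = gx)).

Definition Post (F : list (S -> option S)) (A : S -> Prop) (y : S) : Prop :=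
  exists f a, In f F /\ A a /\ f a = Some y.

Definition down (B : S -> Prop) (x : S) : Prop := exists b, B b /\ le x b.

Definition flat_le (B C : S -> Prop) : Prop := forall x, down B x -> down C x.

Definition step (F : list (S -> option S)) (x y : S) : Prop :=
  exists f, In f F /\ f x = Some y.

Definition Poststar (F : list (S -> option S)) (A : S -> Prop) (y : S) : Prop :=
  exists a, A a /\ clos_refl_trans S (step F) a y.

Definition Cover (F : list (S -> option S)) (s : S) : S -> Prop :=
  down (Poststar F (down (fun x => x = s))).

Definition Lub (E : S -> Prop) (x : S) : Prop :=
  exists D, (forall d, D d -> E d) /\ directed D /\ is_lub D x.

Definition Max (E : S -> Prop) (x : S) : Prop :=
  E x /\ forall y, E y -> le x y -> y = x.

Definition Clover (F : list (S -> option S)) (s : S) : S -> Prop :=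
  Max (Lub (Cover F s)).

Definition finite_set (A : S -> Prop) : Prop :=
  exists l : list S, forall x, A x <-> In x l.

(* A run of the procedure Clover(s0): A n is the value of A after n iterations
   (if the loop has exited before, A keeps its final value); (ws n, as_ n) is
   the pair (g, a) chosen at iteration n+1. *)
Definition clover_run (F : list (S -> option S)) (s0 : S)
    (A : nat -> S -> Prop) (ws : nat -> list (S -> option S)) (as_ : nat -> S) : Prop :=
  (forall x, A 0 x <-> x = s0) /\
  (forall n,
     (flat_le (Post F (A n)) (A n) /\ (forall x, A (Datatypes.S n) x <-> A n x)) \/
     (~ flat_le (Post F (A n)) (A n) /\
      in_Fstar F (ws n) /\ A n (as_ n) /\ dom (comp (ws n)) (as_ n) /\
      exists y, accel (comp (ws n)) (as_ n) y /\
        (forall x, A (Datatypes.S n) x <-> (A n x \/ x = y)))) /\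
  (* fairness on infinite runs *)
  ((forall n, ~ flat_le (Post F (A n)) (A n)) ->
   forall w n a, in_Fstar F w -> A n a -> dom (comp w) a ->
     exists m, n <= m /\ (forall x, comp (ws m) x = comp w x) /\ as_ m = a).

End WSTS.

From Stdlib Require Import List Arith Relations.
From Stdlib Require Import Lia Classical ClassicalEpsilon.
Import ListNotations.

(* A downward-closed subset of a well partial order is a finite union of
   directed sets; in a dcpo each of them has a lub, so Cover(s0) lies below a
   finite set ms of elements of Lub(Cover(s0)).  By continuity of the maps,
   the downward closure of ms is closed under F, under F^*, under directed lubs
   and hence under lub-acceleration, so it contains every A_n.  Finally every
   element of ms lies below a maximal one, and the maximal elements of ms are
   maximal in Lub(Cover(s0)), i.e. they belong to Clover(s0). *)

Section Order.
Context {S : Type} (le : S -> S -> Prop).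
Hypothesis le_trans : forall x y z, le x y -> le y z -> le x z.

Definition down_list (ms : list S) : S -> Prop := down le (fun m => In m ms).

Definition lub_closed (P : S -> Prop) : Prop :=
  forall D d, directed le D -> (forall x, D x -> P x) -> is_lub le D d -> P d.

Lemma directed_bounded_in_list (ms : list S) (D : S -> Prop) :
  directed le D -> (forall x, D x -> down_list ms x) ->
  exists m, In m ms /\ forall x, D x -> le x m.
Proof.
  intros [[d0 Hd0] Hup]. induction ms as [|h t IH]; intros Hsub.
  - destruct (Hsub d0 Hd0) as [m [[] _]].
  - destruct (classic (forall x, D x -> le x h)) as [Hh|Hh].
    + exists h; split; [left; reflexivity | exact Hh].
    + apply not_all_ex_not in Hh as [d Hd].
      apply imply_to_and in Hd as [Dd Hnd].
      destruct IH as [m [Hm Hm']].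
      * intros e De. destruct (Hup d e Dd De) as [u [Du [Hdu Heu]]].
        destruct (Hsub u Du) as [m [[<-|Hm] Hum]].
        -- exfalso; apply Hnd; eauto.
        -- exists m; split; eauto.
      * exists m; split; [right; exact Hm | exact Hm'].
Qed.

Lemma down_list_lub_closed (ms : list S) : lub_closed (down_list ms).
Proof.
  intros D d Hdir Hsub [_ Hleast].
  destruct (directed_bounded_in_list ms D Hdir Hsub) as [m [Hm Hbound]].
  exists m; split; auto.
Qed.

Section Maximal.
Hypothesis le_refl : forall x, le x x.
Hypothesis le_antisym : forall x y, le x y -> le y x -> x = y.

Lemma list_maximal_above (l : list S) x : In x l ->
  exists y, In y l /\ le x y /\ forall z, In z l -> le y z -> z = y.
Proof.
  revert x; induction l as [|h t IH]; intros x Hx; [destruct Hx|].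
  destruct (classic (exists z, In z t /\ le x z)) as [[z [Hz Hxz]]|Hn].
  - destruct (IH z Hz) as [y [Hy [Hzy Hmax]]].
    destruct (classic (le y h)) as [Hyh|Hyh].
    + exists h. split; [left; reflexivity|]. split; [eauto|].
      intros w [<-|Hw] Hhw; [reflexivity|].
      assert (w = y) by (apply Hmax; eauto). subst w. apply le_antisym; auto.
    + exists y. split; [right; exact Hy|]. split; [eauto|].
      intros w [<-|Hw] Hyw; [contradiction | auto].
  - destruct Hx as [->|Hx]; [|exfalso; apply Hn; eauto].
    exists x. split; [left; reflexivity|]. split; [auto|].
    intros w [<-|Hw] Hxw; [reflexivity | exfalso; apply Hn; eauto].
Qed.

Lemma flat_le_Max (L : S -> Prop) (ms : list S) :
  (forall m, In m ms -> L m) -> (forall x, L x -> down_list ms x) ->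
  flat_le le L (Max le L).
Proof.
  intros HmsL HLms x [b [Lb Hxb]].
  destruct (HLms b Lb) as [m [Hm Hbm]].
  destruct (list_maximal_above ms m Hm) as [c [Hc [Hmc Hmax]]].
  exists c. split; [split; [auto|] | eauto].
  intros y Ly Hcy. destruct (HLms y Ly) as [c' [Hc' Hyc']].
  assert (c' = c) by (apply Hmax; eauto). subst c'.
  apply le_antisym; auto.
Qed.

End Maximal.
End Order.

Section WellPartialOrder.
Context {S : Type} (le : S -> S -> Prop).
Hypothesis le_refl : forall x, le x x.
Hypothesis le_trans : forall x y z, le x y -> le y z -> le x z.
Hypothesis le_good : forall f : nat -> S, exists i j, i < j /\ le (f i) (f j).

Definition down_closed (D : S -> Prop) : Prop := forall x y, le x y -> D y -> D x.

Definition finite_directed_union (D : S -> Prop) : Prop :=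
  exists Is : list (S -> Prop),
    (forall I, In I Is -> directed le I /\ forall x, I x -> D x) /\
    forall x, D x -> exists I, In I Is /\ I x.

Lemma finite_directed_union_cover (D D1 D2 : S -> Prop) :
  finite_directed_union D1 -> finite_directed_union D2 ->
  (forall x, D1 x -> D x) -> (forall x, D2 x -> D x) ->
  (forall x, D x -> D1 x \/ D2 x) -> finite_directed_union D.
Proof.
  intros [I1 [H1a H1b]] [I2 [H2a H2b]] HD1 HD2 HD.
  exists (I1 ++ I2). split.
  - intros I HI. apply in_app_or in HI as [HI|HI];
      [destruct (H1a I HI) as [Hd Hs] | destruct (H2a I HI) as [Hd Hs]];
      split; auto.
  - intros x Dx. destruct (HD x Dx) as [Hx|Hx];
      [destruct (H1b x Hx) as [I [HI Ix]] | destruct (H2b x Hx) as [I [HI Ix]]];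
      exists I; split; auto; apply in_or_app; auto.
Qed.

(* If D is not directed, pick x, y in D without a common upper bound in D;
   D is covered by its two parts avoiding the upper cones of x and of y. *)
Lemma not_finite_directed_union_shrink (D : S -> Prop) :
  down_closed D -> ~ finite_directed_union D ->
  exists D' x, down_closed D' /\ ~ finite_directed_union D' /\
    (forall z, D' z -> D z) /\ D x /\ ~ D' x.
Proof.
  intros HD Hnot.
  set (avoid z := fun w => D w /\ ~ le z w).
  assert (avoid_shrink : forall z, D z -> ~ finite_directed_union (avoid z) ->
    exists D' x, down_closed D' /\ ~ finite_directed_union D' /\
      (forall z, D' z -> D z) /\ D x /\ ~ D' x).
  { intros z Dz Hz. exists (avoid z), z. split; [|split; [exact Hz|split; [|split]]].
    - intros a b Hab [Db Hb]. split; [exact (HD a b Hab Db)|].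
      intro Hza; apply Hb; eauto.
    - intros w [Dw _]; exact Dw.
    - exact Dz.
    - intros [_ Hzz]; apply Hzz, le_refl. }
  destruct (classic (exists x, D x)) as [Hne|Hne].
  2:{ exfalso; apply Hnot; exists []; split; [intros I []|].
      intros x Dx; exfalso; apply Hne; eauto. }
  destruct (classic (forall x y, D x -> D y -> exists z, D z /\ le x z /\ le y z))
    as [Hdir|Hnd].
  { exfalso; apply Hnot; exists [D]; split.
    - intros I [<-|[]]; split; [split; assumption | auto].
    - intros x Dx; exists D; split; [left; reflexivity | exact Dx]. }
  apply not_all_ex_not in Hnd as [x Hnd]; apply not_all_ex_not in Hnd as [y Hnd].
  apply imply_to_and in Hnd as [Dx Hnd]; apply imply_to_and in Hnd as [Dy Hnd].
  destruct (classic (finite_directed_union (avoid x))) as [Gx|Gx];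
    [|exact (avoid_shrink x Dx Gx)].
  destruct (classic (finite_directed_union (avoid y))) as [Gy|Gy];
    [|exact (avoid_shrink y Dy Gy)].
  exfalso; apply Hnot, (finite_directed_union_cover D _ _ Gx Gy);
    [intros z [Dz _]; exact Dz | intros z [Dz _]; exact Dz |].
  intros z Dz. destruct (classic (le x z)) as [Hxz|Hxz].
  - destruct (classic (le y z)) as [Hyz|Hyz]; [exfalso; apply Hnd; eauto|].
    right; split; assumption.
  - left; split; assumption.
Qed.

Lemma wpo_no_strictly_descending_chain (Ds : nat -> S -> Prop) (xs : nat -> S) :
  (forall n, down_closed (Ds n)) -> (forall n x, Ds (Datatypes.S n) x -> Ds n x) ->
  (forall n, Ds n (xs n)) -> (forall n, ~ Ds (Datatypes.S n) (xs n)) -> False.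
Proof.
  intros Hdc Hsub Hin Hout.
  assert (Hdesc : forall i j x, i <= j -> Ds j x -> Ds i x)
    by (intros i j x Hij; induction Hij; auto).
  destruct (le_good xs) as [i [j [Hij Hle]]].
  apply (Hout i), (Hdc _ _ (xs j) Hle), (Hdesc _ j); auto.
Qed.

Lemma wpo_down_closed_finite_directed_union (D : S -> Prop) :
  down_closed D -> finite_directed_union D.
Proof.
  intros HD. apply NNPP. intro Hbad.
  set (Bad := {B : S -> Prop | down_closed B /\ ~ finite_directed_union B}).
  assert (Hshrink : forall B : Bad, exists p : Bad * S,
    (forall x, proj1_sig (fst p) x -> proj1_sig B x) /\
    proj1_sig B (snd p) /\ ~ proj1_sig (fst p) (snd p)).
  { intros [B [HB HnB]].
    destruct (not_finite_directed_union_shrink B HB HnB)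
      as [B' [x [HB' [HnB' [Hsub [Bx HnB'x]]]]]].
    exists (exist _ B' (conj HB' HnB'), x). split; [|split]; assumption. }
  destruct (choice _ Hshrink) as [next Hnext].
  set (chain n := Nat.iter n (fun B => fst (next B)) (exist _ D (conj HD Hbad) : Bad)).
  apply (wpo_no_strictly_descending_chain (fun n => proj1_sig (chain n))
           (fun n => snd (next (chain n)))).
  - intros n. exact (proj1 (proj2_sig (chain n))).
  - intros n. apply (Hnext (chain n)).
  - intros n. apply (Hnext (chain n)).
  - intros n. apply (Hnext (chain n)).
Qed.

Hypothesis le_dcpo : dcpo le.

Lemma wpo_down_closed_Lub_basis (D : S -> Prop) : down_closed D ->
  exists ms, (forall m, In m ms -> Lub le D m) /\ (forall x, D x -> down_list le ms x).
Proof.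
  intros HD. destruct (wpo_down_closed_finite_directed_union D HD) as [Is [HIs Hcov]].
  assert (Hlubs : exists ms, (forall m, In m ms -> Lub le D m) /\
            forall I, In I Is -> exists m, In m ms /\ is_lub le I m).
  { clear Hcov. induction Is as [|I Is IH].
    - exists []; split; intros _ [].
    - destruct IH as [ms [H1 H2]]; [intros J HJ; apply HIs; right; exact HJ|].
      destruct (HIs I (or_introl eq_refl)) as [HdirI HsubI].
      destruct (le_dcpo I HdirI) as [m Hm].
      exists (m :: ms); split.
      + intros m' [<-|Hm']; [exists I; split; [|split]; assumption | auto].
      + intros J [<-|HJ]; [exists m; split; [left|]; auto|].
        destruct (H2 J HJ) as [m' [? ?]]; exists m'; split; [right|]; auto. }
  destruct Hlubs as [ms [Hms HIms]]. exists ms. split; [exact Hms|].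
  intros x Dx. destruct (Hcov x Dx) as [I [HI Ix]].
  destruct (HIms I HI) as [m [Hm [Hub _]]]. exists m; split; auto.
Qed.

End WellPartialOrder.

Section Iteration.
Context {S : Type} (le : S -> S -> Prop).
Hypothesis le_refl : forall x, le x x.
Hypothesis le_trans : forall x y z, le x y -> le y z -> le x z.

Definition monotone_partial (g : S -> option S) : Prop :=
  forall x y gx, le x y -> g x = Some gx -> exists gy, g y = Some gy /\ le gx gy.

Definition closed_under_map (g : S -> option S) (P : S -> Prop) : Prop :=
  forall x y, P x -> g x = Some y -> P y.

Variable g : S -> option S.
Hypothesis g_mono : monotone_partial g.

(* Starting from a <= g a, monotonicity makes the iterates an increasing chain. *)
Lemma giter_directed a ga : g a = Some ga -> le a ga ->
  directed le (fun z => exists n, giter g n a = Some z).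
Proof.
  intros Hga Hle.
  assert (Hchain : forall n z z', giter g n a = Some z ->
            giter g (Datatypes.S n) a = Some z' -> le z z').
  { induction n as [|n IH]; intros z z' Hz Hz'; simpl in *.
    - injection Hz as <-. congruence.
    - destruct (giter g n a) as [p|]; [|discriminate].
      rewrite Hz in Hz'.
      destruct (g_mono p z z (IH p z eq_refl Hz) Hz) as [z'' [E Hl]]. congruence. }
  assert (Hmono : forall k n z z', giter g n a = Some z ->
            giter g (k + n) a = Some z' -> le z z').
  { induction k as [|k IH]; intros n z z' Hz Hz'; simpl in Hz'.
    - rewrite Hz in Hz'; injection Hz' as <-. apply le_refl.
    - destruct (giter g (k + n) a) as [p|] eqn:E; [|discriminate].
      apply le_trans with p; [exact (IH n z p Hz E)|].
      apply (Hchain (k + n)); [exact E | simpl; rewrite E; exact Hz']. }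
  split; [exists a, 0; reflexivity|].
  intros z1 z2 [n1 H1] [n2 H2].
  destruct (le_ge_dec n1 n2) as [Hn|Hn].
  - exists z2. split; [exists n2; exact H2|]. split; [|apply le_refl].
    replace n2 with ((n2 - n1) + n1) in H2 by lia. exact (Hmono _ _ _ _ H1 H2).
  - exists z1. split; [exists n1; exact H1|]. split; [apply le_refl|].
    replace n1 with ((n1 - n2) + n2) in H1 by lia. exact (Hmono _ _ _ _ H2 H1).
Qed.

Lemma giter_closed (P : S -> Prop) n a z :
  closed_under_map g P -> P a -> giter g n a = Some z -> P z.
Proof.
  intros HP Ha. revert z; induction n as [|n IH]; intros z Hz; simpl in Hz.
  - injection Hz as <-; exact Ha.
  - destruct (giter g n a) as [p|]; [|discriminate].
    exact (HP p z (IH p eq_refl) Hz).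
Qed.

Lemma accel_closed (P : S -> Prop) a y :
  closed_under_map g P -> lub_closed le P -> P a -> accel le g a y -> P y.
Proof.
  intros HP HPlub Ha [ga [Hga [[[Hlt _] Hlub]|[_ ->]]]].
  - apply (HPlub _ y (giter_directed a ga Hga Hlt) ); [|exact Hlub].
    intros z [n Hz]. exact (giter_closed P n a z HP Ha Hz).
  - exact (HP a ga Ha Hga).
Qed.

End Iteration.

Section Continuity.
Context {S : Type} (le : S -> S -> Prop).
Hypothesis le_refl : forall x, le x x.
Hypothesis le_trans : forall x y z, le x y -> le y z -> le x z.

Definition image (f : S -> option S) (D : S -> Prop) (y : S) : Prop :=
  exists x, D x /\ f x = Some y.

(* Continuity applied to the directed pair {x, y}, whose lub is y. *)
Lemma partial_continuous_monotone f :
  partial_continuous le f -> monotone_partial le f.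
Proof.
  intros [[Hup _] Hc] x y fx Hxy Hfx.
  destruct (Hc (fun z => z = x \/ z = y) y) as [fd [Hfd [Hub _]]].
  - split; [exists x; left; reflexivity|].
    intros a b Ha Hb. exists y. split; [right; reflexivity|].
    destruct Ha as [->| ->], Hb as [->| ->]; auto.
  - intros z [->| ->]; [unfold dom; congruence|].
    apply (Hup x y); [unfold dom; congruence | exact Hxy].
  - split; [intros z [->| ->]; auto|]. intros u Hu; apply Hu; right; reflexivity.
  - exists fd; split; [exact Hfd|]. apply Hub. exists x; split; [left|]; auto.
Qed.

Lemma scott_open_restrict_lub (U I : S -> Prop) m :
  scott_open le U -> directed le I -> is_lub le I m -> U m ->
  directed le (fun x => I x /\ U x) /\ is_lub le (fun x => I x /\ U x) m.
Proof.
  intros [Hup Hsc] HI Hlub Um.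
  destruct (Hsc I m HI Hlub Um) as [z [Iz Uz]].
  destruct HI as [_ Hdir].
  split; split.
  - exists z; split; assumption.
  - intros a b [Ia Ua] [Ib Ub]. destruct (Hdir a b Ia Ib) as [c [Ic [Hac Hbc]]].
    exists c. split; [split; [exact Ic | exact (Hup a c Ua Hac)] | split; assumption].
  - intros d [Id _]. exact (proj1 Hlub d Id).
  - intros u Hu. apply (proj2 Hlub). intros d Id.
    destruct (Hdir d z Id Iz) as [c [Ic [Hdc Hzc]]].
    apply le_trans with c; [exact Hdc|].
    apply Hu; split; [exact Ic | exact (Hup z c Uz Hzc)].
Qed.

Lemma partial_continuous_image_lub f (I : S -> Prop) m fm :
  partial_continuous le f -> directed le I -> is_lub le I m -> f m = Some fm ->
  directed le (image f I) /\ is_lub le (image f I) fm.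
Proof.
  intros Hf HI Hlub Hfm.
  pose proof (partial_continuous_monotone f Hf) as Hmono.
  destruct Hf as [Hopen Hcont].
  destruct (scott_open_restrict_lub (dom f) I m Hopen HI Hlub) as [Hdir' Hlub'];
    [unfold dom; congruence|].
  destruct (Hcont _ m Hdir' (fun x Hx => proj2 Hx) Hlub') as [fd [Hfd [Hub Hleast]]].
  rewrite Hfm in Hfd. injection Hfd as <-.
  assert (Himage : forall y, image f I y -> exists x, (I x /\ dom f x) /\ f x = Some y).
  { intros y [x [Ix Hfx]]. exists x. split; [split; [exact Ix|] | exact Hfx].
    unfold dom; congruence. }
  destruct Hdir' as [[z [Iz Dz]] Hdir'].
  split; split.
  - destruct (f z) as [fz|] eqn:E; [exists fz, z; split; assumption | contradiction].
  - intros a b Ha Hb.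
    destruct (Himage a Ha) as [xa [Da Ea]], (Himage b Hb) as [xb [Db Eb]].
    destruct (Hdir' xa xb Da Db) as [c [[Ic _] [Hac Hbc]]].
    destruct (Hmono xa c a Hac Ea) as [fc [Ec Hle1]].
    destruct (Hmono xb c b Hbc Eb) as [fc' [Ec' Hle2]].
    rewrite Ec in Ec'; injection Ec' as <-.
    exists fc. split; [exists c; split; assumption | split; assumption].
  - intros y Hy. exact (Hub y (Himage y Hy)).
  - intros u Hu. apply Hleast. intros y [x [[Ix _] Hfx]]. apply Hu. exists x; auto.
Qed.

Definition closed_under (F : list (S -> option S)) (P : S -> Prop) : Prop :=
  forall f, In f F -> closed_under_map f P.

Variable F : list (S -> option S).
Hypothesis F_continuous : forall f, In f F -> partial_continuous le f.

Lemma comp_monotone w : in_Fstar F w -> monotone_partial le (comp w).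
Proof.
  induction w as [|f w IH]; intros Hw x y z Hxy Hc; simpl in *.
  - injection Hc as <-. exists y; split; [reflexivity | exact Hxy].
  - inversion Hw as [|? ? Hf Hw']; subst.
    destruct (f x) as [fx|] eqn:E; [|discriminate].
    destruct (partial_continuous_monotone f (F_continuous f Hf) x y fx Hxy E)
      as [fy [-> Hle]].
    exact (IH Hw' fx fy z Hle Hc).
Qed.

Lemma comp_closed (P : S -> Prop) w :
  closed_under F P -> in_Fstar F w -> closed_under_map (comp w) P.
Proof.
  intros HP. induction w as [|f w IH]; intros Hw x y Hx Hc; simpl in *.
  - injection Hc as <-; exact Hx.
  - inversion Hw as [|? ? Hf Hw']; subst.
    destruct (f x) as [fx|] eqn:E; [|discriminate].
    exact (IH Hw' fx y (HP f Hf x fx Hx E) Hc).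
Qed.

(* The image under f of the lub m of a directed subset of E is the lub of a
   directed subset of the F-closed set E, hence lies below ms. *)
Lemma down_list_closed_under (E : S -> Prop) (ms : list S) :
  closed_under F E -> (forall m, In m ms -> Lub le E m) ->
  (forall x, E x -> down_list le ms x) -> closed_under F (down_list le ms).
Proof.
  intros HE Hms HEms f Hf x y [m [Hm Hxm]] Hfx.
  destruct (partial_continuous_monotone f (F_continuous f Hf) x m y Hxm Hfx)
    as [fm [Hfm Hyfm]].
  destruct (Hms m Hm) as [I [HIE [HI Hlub]]].
  destruct (partial_continuous_image_lub f I m fm (F_continuous f Hf) HI Hlub Hfm)
    as [Hdir Hlub'].
  destruct (down_list_lub_closed le le_trans ms _ fm Hdir) as [c [Hc Hfmc]];
    [|exact Hlub'|].
  - intros z [x' [Ix' Hfx']]. exact (HEms z (HE f Hf x' z (HIE x' Ix') Hfx')).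
  - exists c; split; [exact Hc | eauto].
Qed.

Variable s0 : S.

Lemma Cover_initial : Cover le F s0 s0.
Proof.
  exists s0; split; [|apply le_refl].
  exists s0; split; [exists s0; split; [reflexivity | apply le_refl] | apply rt_refl].
Qed.

Lemma Cover_down_closed : down_closed le (Cover le F s0).
Proof. intros x y Hxy [b [Hb Hyb]]. exists b; split; eauto. Qed.

Lemma Cover_closed_under : closed_under F (Cover le F s0).
Proof.
  intros f Hf x y [b [[a [Ha Hrt]] Hxb]] Hfx.
  destruct (partial_continuous_monotone f (F_continuous f Hf) x b y Hxb Hfx)
    as [fb [Efb Hle]].
  exists fb. split; [|exact Hle]. exists a. split; [exact Ha|].
  apply rt_trans with b; [exact Hrt | apply rt_step; exists f; split; assumption].
Qed.

End Continuity.

Section Run.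
Context {S : Type} (le : S -> S -> Prop) (F : list (S -> option S)) (s0 : S).
Variables (A : nat -> S -> Prop) (ws : nat -> list (S -> option S)) (as_ : nat -> S).
Hypothesis run : clover_run le F s0 A ws as_.

Lemma clover_run_finite n : finite_set (A n).
Proof.
  destruct run as [H0 [Hstep _]].
  induction n as [|n [l Hl]].
  - exists [s0]. intros x; rewrite H0; simpl; split; [auto | intros [H|[]]; auto].
  - destruct (Hstep n) as [[_ Heq]|[_ [_ [_ [_ [y [_ Heq]]]]]]].
    + exists l. intros x; rewrite Heq; auto.
    + exists (y :: l). intros x; rewrite Heq, Hl; simpl; split; intros [Hq|Hq]; auto.
Qed.

Lemma clover_run_flat_le_succ n : flat_le le (A n) (A (Datatypes.S n)).
Proof.
  destruct run as [_ [Hstep _]]. intros x [b [Hb Hxb]]. exists b; split; [|exact Hxb].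
  destruct (Hstep n) as [[_ Heq]|[_ [_ [_ [_ [y [_ Heq]]]]]]]; apply Heq; auto.
Qed.

Lemma clover_run_invariant (P : S -> Prop) :
  P s0 -> (forall w a y, in_Fstar F w -> P a -> accel le (comp w) a y -> P y) ->
  forall n x, A n x -> P x.
Proof.
  destruct run as [H0 [Hstep _]]. intros Hs0 Hacc.
  induction n as [|n IH]; intros x Hx.
  - apply H0 in Hx as ->. exact Hs0.
  - destruct (Hstep n) as [[_ Heq]|[_ [Hw [Ha [_ [y [Hy Heq]]]]]]].
    + exact (IH x (proj1 (Heq x) Hx)).
    + apply Heq in Hx as [Hx| ->]; [exact (IH x Hx)|].
      exact (Hacc _ _ y Hw (IH _ Ha) Hy).
Qed.

End Run.

Theorem proposition5p3 (S : Type) (le : S -> S -> Prop) (F : list (S -> option S))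
  (HS : complete_functional_WSTS le F) (s0 : S)
  (A : nat -> S -> Prop) (ws : nat -> list (S -> option S)) (as_ : nat -> S)
  (Hrun : clover_run le F s0 A ws as_) :
  forall n : nat,
    finite_set (A n) /\
    flat_le le (A n) (A (Datatypes.S n)) /\
    flat_le le (A (Datatypes.S n)) (Clover le F s0).
Proof.
  destruct HS as [[[Hrefl [Hanti Htrans]] Hgood] [[Hdcpo _] Hcont]].
  destruct (wpo_down_closed_Lub_basis le Hrefl Htrans Hgood Hdcpo (Cover le F s0)
              (Cover_down_closed le Htrans F s0)) as [ms [HmsLub HCover]].
  set (P := down_list le ms).
  assert (HP_closed : closed_under F P)
    by exact (down_list_closed_under le Hrefl Htrans F Hcont _ ms
                (Cover_closed_under le Hrefl F Hcont s0) HmsLub HCover).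
  assert (HP_lub : lub_closed le P) by exact (down_list_lub_closed le Htrans ms).
  assert (HA : forall n x, A n x -> P x).
  { apply (clover_run_invariant le F s0 A ws as_ Hrun);
      [exact (HCover s0 (Cover_initial le Hrefl F s0)) |].
    intros w a y Hw Ha Hy.
    exact (accel_closed le Hrefl Htrans (comp w) (comp_monotone le Hrefl F Hcont w Hw)
             P a y (comp_closed F P w HP_closed Hw) HP_lub Ha Hy). }
  assert (HLub : forall x, Lub le (Cover le F s0) x -> P x).
  { intros x [D [HD [Hdir Hlub]]].
    exact (HP_lub D x Hdir (fun d Hd => HCover d (HD d Hd)) Hlub). }
  intros n; split; [|split].
  - exact (clover_run_finite le F s0 A ws as_ Hrun n).
  - exact (clover_run_flat_le_succ le F s0 A ws as_ Hrun n).
  - intros x [b [Hb Hxb]].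
    destruct (HA _ b Hb) as [m [Hm Hbm]].
    apply (flat_le_Max le Htrans Hrefl Hanti _ ms HmsLub HLub).
    exists m; split; [exact (HmsLub m Hm) | eauto].
Qed.
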